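(* Let $\|\cdot\|$ be a norm on $\mathbb{R}^d$ and $\Phi$ a mirror map whose Bregman divergence satisfies $\frac{m}{2}\|x-y\|^2\le D_\Phi(x,y)\le\frac{M}{2}\|x-y\|^2$ for all $x,y$, with $0<m\le M$; let $\kappa=M/m$. Consider Primal Online Balanced Descent with parameter $\beta>0$, norm $\|\cdot\|$ and mirror map $\Phi$, at round $t$, producing $x_t$ from $x_{t-1}$ and convex cost function $f_t$ with minimizer $v_t$. Let $x_t^*$ be a point with $H_t^*=f_t(x_t^* )<H_t=f_t(x_t)$, and suppose $f_t(x)\ge\alpha\|x-v_t\|$ for all $x$, where $\alpha>0$. Then $$\|x_t-x_t^*\|-\|x_t^*-x_{t-1}\|\le-\gamma\|x_t-x_{t-1}\|,\qquad\text{where }\gamma=\frac{1}{\sqrt{\kappa}}\sqrt{1+\left(\tfrac{2}{\alpha\beta}\right)^2}-\tfrac{2}{\alpha\beta}.$$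
   Context: $D_\Phi(x,y)=\Phi(x)-\Phi(y)-\nabla\Phi(y)^T(x-y)$; $\Pi^\Phi_K(x)=\arg\min_{y\in K}D_\Phi(y,x)$. Primal Online Balanced Descent with parameter $\beta>0$: given $x_{t-1}$ and $f_t$, let $v_t=\arg\min_x f_t(x)$; if $\|x_{t-1}-v_t\|<\beta f_t(v_t)$ set $x_t=v_t$; otherwise, with $K^l_t=\{x:f_t(x)\le l\}$ and $x(l)=\Pi^\Phi_{K^l_t}(x_{t-1})$, increase $l$ until $\|x(l)-x_{t-1}\|=\beta l$ and set $x_t=x(l)$. *)

From HB Require Import structures.
From mathcomp Require Import all_boot all_order all_algebra.
From mathcomp Require Import all_classical all_reals all_analysis.
Set Implicit Arguments. Unset Strict Implicit. Unset Printing Implicit Defensive.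
Import Order.TTheory GRing.Theory Num.Theory.
Import numFieldNormedType.Exports.
Local Open Scope classical_set_scope.
Local Open Scope ring_scope.

Definition dotv (R : realType) (d : nat) (u v : 'rV[R]_d) : R :=
  \sum_(i < d) u 0 i * v 0 i.

Definition bregman (R : realType) (d : nat) (Phi : 'rV[R]_d -> R)
  (gPhi : 'rV[R]_d -> 'rV[R]_d) (x y : 'rV[R]_d) : R :=
  Phi x - Phi y - dotv (gPhi y) (x - y).

Definition is_gradient (R : realType) (d : nat) (Phi : 'rV[R]_d -> R)
  (gPhi : 'rV[R]_d -> 'rV[R]_d) : Prop :=
  forall x v : 'rV[R]_d, is_derive x v Phi (dotv (gPhi x) v).

Definition is_norm (R : realType) (d : nat) (N : 'rV[R]_d -> R) : Prop :=
  [/\ forall x y, N (x + y) <= N x + N y,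
      forall (a : R) x, N (a *: x) = `|a| * N x
    & forall x, N x = 0 -> x = 0].

Definition convex_fun (R : realType) (d : nat) (f : 'rV[R]_d -> R) : Prop :=
  forall (x y : 'rV[R]_d) (t : R), 0 <= t <= 1 ->
    f (t *: x + (1 - t) *: y) <= t * f x + (1 - t) * f y.

Definition level_set (R : realType) (d : nat) (f : 'rV[R]_d -> R) (l : R)
  : set 'rV[R]_d := [set x | f x <= l].

Definition is_bregman_proj (R : realType) (d : nat) (Phi : 'rV[R]_d -> R)
  (gPhi : 'rV[R]_d -> 'rV[R]_d) (K : set 'rV[R]_d) (x p : 'rV[R]_d) : Prop :=
  K p /\ forall y, K y -> bregman Phi gPhi p x <= bregman Phi gPhi y x.

Definition pobd_step (R : realType) (d : nat) (N : 'rV[R]_d -> R)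
  (Phi : 'rV[R]_d -> R) (gPhi : 'rV[R]_d -> 'rV[R]_d) (beta : R)
  (f : 'rV[R]_d -> R) (v xprev xt : 'rV[R]_d) : Prop :=
  (N (xprev - v) < beta * f v /\ xt = v) \/
  (beta * f v <= N (xprev - v) /\
   exists l : R, is_bregman_proj Phi gPhi (level_set f l) xprev xt /\
                 N (xt - xprev) = beta * l).

From HB Require Import structures.
From mathcomp Require Import all_boot all_order all_algebra.
From mathcomp Require Import all_classical all_reals all_analysis.
From mathcomp Require Import ring lra.
Set Implicit Arguments. Unset Strict Implicit. Unset Printing Implicit Defensive.
Import Order.TTheory GRing.Theory Num.Theory.
Import numFieldNormedType.Exports.
Local Open Scope classical_set_scope.
Local Open Scope ring_scope.

(* If xt = v then f xt is minimal, contradicting f xstar < f xt.  Otherwise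
   xt is the Bregman projection of xprev onto the convex level set K^l, which
   contains xstar since f xstar < f xt <= l.  The generalized Pythagorean
   inequality D(xstar, xprev) >= D(xstar, xt) + D(xt, xprev) together with the
   quadratic bounds on D gives m (a^2 + d^2) <= M b^2, where a = N(xt - xstar),
   b = N(xstar - xprev) and d = N(xt - xprev) = beta l.  The growth condition
   gives alpha a <= f xt + f xstar <= 2 l, i.e. a <= c d with
   c = 2 / (alpha beta).  Hence b - a >= sqrt(m/M) sqrt(a^2 + d^2) - a, and as
   t |-> sqrt(t^2 + d^2) - t is nonincreasing the worst case is a = c d, which
   yields exactly gamma d. *)

Lemma is_derive_ge (R : realType) (V : normedModType R) (F : V -> R) x w l c :
  is_derive x w F l ->
  (forall s, 0 < s < 1 -> F x + s * c <= F (x + s *: w)) -> c <= l.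
Proof.
move=> [dF <-] Fge.
apply: (@cvgr_to_ge R (0 : R)^'+ _ R
  (fun h : R => h^-1 *: ((F \o shift x) (h *: w) - F x))).
  exact: cvg_dnbhs_at_right dF.
near=> h.
have h_gt0 : 0 < h by near: h; exact: nbhs_right_gt.
have h_lt1 : h < 1 by near: h; apply: nbhs_right_lt; exact: ltr01.
have := Fge h; rewrite h_gt0 h_lt1 addrC => /(_ isT).
rewrite /= -[h^-1 *: _]/(h^-1 * _) [h^-1 * _]mulrC ler_pdivlMr // (addrC (h *: w)).
lra.
Unshelve. all: by end_near.
Qed.

Lemma ler_sqrt_sqrD_sub (R : rcfType) (a c e : R) : 0 <= a <= c -> 0 <= e ->
  Num.sqrt (c ^+ 2 + e) - c <= Num.sqrt (a ^+ 2 + e) - a.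
Proof.
move=> /andP[a_ge0 le_ac] e_ge0.
set p := Num.sqrt (a ^+ 2 + e); set q := Num.sqrt (c ^+ 2 + e).
have p_ge0 : 0 <= p := sqrtr_ge0 _.
have q_ge0 : 0 <= q := sqrtr_ge0 _.
have p2 : p ^+ 2 = a ^+ 2 + e by rewrite sqr_sqrtr // addr_ge0 ?sqr_ge0.
have q2 : q ^+ 2 = c ^+ 2 + e by rewrite sqr_sqrtr // addr_ge0 ?sqr_ge0.
have le_ap : a <= p by nra.
have le_cq : c <= q by nra.
nra.
Qed.

Section BalancedDescentArith.
Variables (R : realType) (m M alpha beta : R).
Hypotheses (m_gt0 : 0 < m) (le_mM : m <= M) (alpha_gt0 : 0 < alpha) (beta_gt0 : 0 < beta).

Lemma inv_sqrt_ratio : 1 / Num.sqrt (M / m) = Num.sqrt (m / M).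
Proof.
have M_gt0 : 0 < M := lt_le_trans m_gt0 le_mM.
by rewrite div1r -sqrtrV ?invf_div // divr_ge0 // ltW.
Qed.

Lemma balanced_descent_arith (a b dl : R) :
  0 <= a -> 0 <= b -> 0 <= dl ->
  m * (a ^+ 2 + dl ^+ 2) <= M * b ^+ 2 -> alpha * beta * a <= 2 * dl ->
  a - b <= - (1 / Num.sqrt (M / m) * Num.sqrt (1 + (2 / (alpha * beta)) ^+ 2)
               - 2 / (alpha * beta)) * dl.
Proof.
move=> a_ge0 b_ge0 dl_ge0 le_ab le_adl.
have M_gt0 : 0 < M := lt_le_trans m_gt0 le_mM.
rewrite inv_sqrt_ratio; set c := 2 / (alpha * beta); set r := Num.sqrt (m / M).
set p := Num.sqrt (a ^+ 2 + dl ^+ 2); set q := Num.sqrt ((c * dl) ^+ 2 + dl ^+ 2).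
have ab_gt0 : 0 < alpha * beta by rewrite mulr_gt0.
have le_a_cdl : a <= c * dl by rewrite /c mulrAC ler_pdivlMr // mulrC.
have r_ge0 : 0 <= r := sqrtr_ge0 _.
have r_le1 : r <= 1 by rewrite -sqrtr1 ler_sqrt // ler_pdivrMr // mul1r.
have le_rp_b : r * p <= b.
  rewrite -sqrtrM ?divr_ge0 ?(ltW m_gt0) ?(ltW M_gt0) //.
  rewrite -(ger0_norm b_ge0) -sqrtr_sqr ler_sqrt ?sqr_ge0 //.
  by rewrite mulrAC ler_pdivrMr // [_ * M]mulrC.
have q_eq : q = Num.sqrt (1 + c ^+ 2) * dl.
  rewrite -[X in _ * X]ger0_norm // -sqrtr_sqr -sqrtrM ?addr_ge0 ?sqr_ge0 //.
  by congr Num.sqrt; ring.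
have le_qp : q - c * dl <= p - a.
  by apply: ler_sqrt_sqrD_sub; rewrite ?a_ge0 ?sqr_ge0.
have le_pq : p <= q by rewrite ler_sqrt ?addr_ge0 ?sqr_ge0 // lerD2r; nra.
have le_rqp : r * (q - p) <= q - p by rewrite ler_piMl // subr_ge0.
have -> : - (r * Num.sqrt (1 + c ^+ 2) - c) * dl = c * dl - r * q.
  by rewrite q_eq; ring.
lra.
Qed.

End BalancedDescentArith.

Section Norm.
Variables (R : realType) (d : nat) (N : 'rV[R]_d -> R).
Hypothesis normN : is_norm N.

Lemma is_norm0 : N 0 = 0.
Proof. by case: normN => _ hom _; rewrite -(scale0r 0) hom normr0 mul0r. Qed.

Lemma is_normN x : N (- x) = N x.
Proof. by case: normN => _ hom _; rewrite -scaleN1r hom normrN normr1 mul1r. Qed.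

Lemma is_norm_ge0 x : 0 <= N x.
Proof.
case: normN => tri _ _; have := tri x (- x).
by rewrite subrr is_norm0 is_normN; lra.
Qed.

Lemma is_norm_distC x y : N (x - y) = N (y - x).
Proof. by rewrite -is_normN opprB. Qed.

Lemma is_norm_dist_le x y v : N (x - y) <= N (x - v) + N (y - v).
Proof.
case: normN => tri _ _.
by rewrite [N (y - v)]is_norm_distC -[x - y](subrKA v) tri.
Qed.

End Norm.

Section Dotv.
Variables (R : realType) (d : nat).
Implicit Types u w x y : 'rV[R]_d.

Lemma dotvD u x y : dotv u (x + y) = dotv u x + dotv u y.
Proof. by rewrite /dotv -big_split; apply: eq_bigr => i _; rewrite mxE mulrDr. Qed.

Lemma dotvN u x : dotv u (- x) = - dotv u x.
Proof. by rewrite /dotv -sumrN; apply: eq_bigr => i _; rewrite mxE mulrN. Qed.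

Lemma dotvZ u k x : dotv u (k *: x) = k * dotv u x.
Proof. by rewrite /dotv mulr_sumr; apply: eq_bigr => i _; rewrite mxE mulrCA. Qed.

Lemma dotvBl u w x : dotv (u - w) x = dotv u x - dotv w x.
Proof. by rewrite /dotv -sumrB; apply: eq_bigr => i _; rewrite !mxE mulrBl. Qed.

End Dotv.

Section Bregman.
Variables (R : realType) (d : nat).
Variables (Phi : 'rV[R]_d -> R) (gPhi : 'rV[R]_d -> 'rV[R]_d).
Implicit Types x y z p : 'rV[R]_d.
Local Notation D := (bregman Phi gPhi).

Lemma bregman_three_point x y z :
  D y x = D y z + D z x + dotv (gPhi z - gPhi x) (y - z).
Proof. by rewrite /bregman dotvBl !dotvD !dotvN; ring. Qed.

Hypothesis gradPhi : is_gradient Phi gPhi.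

Lemma bregman_proj_variational K x p y :
  is_bregman_proj Phi gPhi K x p ->
  (forall s, 0 < s < 1 -> K (p + s *: (y - p))) ->
  0 <= dotv (gPhi p - gPhi x) (y - p).
Proof.
move=> [_ p_min] K_seg; rewrite dotvBl subr_ge0.
apply: is_derive_ge (gradPhi p (y - p)) _ => s s01.
have := p_min _ (K_seg s s01).
by rewrite /bregman [p + _ - x]addrAC (dotvD _ (p - x)) dotvZ; lra.
Qed.

Lemma bregman_proj_pythagoras K x p y :
  is_bregman_proj Phi gPhi K x p ->
  (forall s, 0 < s < 1 -> K (p + s *: (y - p))) ->
  D y p + D p x <= D y x.
Proof.
move=> proj K_seg; rewrite (bregman_three_point x y p) lerDl.
exact: bregman_proj_variational proj K_seg.
Qed.

End Bregman.

Lemma level_set_segment (R : realType) (d : nat) (f : 'rV[R]_d -> R) l x y s :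
  convex_fun f -> f x <= l -> f y <= l -> 0 <= s <= 1 ->
  level_set f l (x + s *: (y - x)).
Proof.
move=> cvx_f fx_le fy_le /andP[s_ge0 s_le1].
have -> : x + s *: (y - x) = s *: y + (1 - s) *: x.
  by rewrite scalerBr scalerBl scale1r addrCA.
apply: le_trans (cvx_f _ _ _ _) _; first by rewrite s_ge0 s_le1.
by nra.
Qed.

Theorem lemma14 (R : realType) (d : nat) (N : 'rV[R]_d -> R)
  (Phi : 'rV[R]_d -> R) (gPhi : 'rV[R]_d -> 'rV[R]_d) (m M : R)
  (beta alpha : R) (f : 'rV[R]_d -> R) (v xprev xt xstar : 'rV[R]_d) :
  is_norm N ->
  is_gradient Phi gPhi ->
  0 < m -> m <= M ->
  (forall x y, m / 2 * N (x - y) ^+ 2 <= bregman Phi gPhi x y) ->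
  (forall x y, bregman Phi gPhi x y <= M / 2 * N (x - y) ^+ 2) ->
  0 < beta ->
  convex_fun f ->
  (forall x, f v <= f x) ->
  pobd_step N Phi gPhi beta f v xprev xt ->
  f xstar < f xt ->
  0 < alpha ->
  (forall x, alpha * N (x - v) <= f x) ->
  let kappa := M / m in
  let gamma := 1 / Num.sqrt kappa * Num.sqrt (1 + (2 / (alpha * beta)) ^+ 2)
               - 2 / (alpha * beta) in
  N (xt - xstar) - N (xstar - xprev) <= - gamma * N (xt - xprev).
Proof.
move=> normN gradPhi m_gt0 le_mM D_lb D_ub beta_gt0 cvx_f v_min step
  fstar_lt alpha_gt0 growth /=.
case: step => [[_ xt_v] | [_ [l [proj dist_l]]]].
  by have := v_min xstar; rewrite -xt_v leNgt fstar_lt.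
have fxt_le : f xt <= l := proj.1.
have fstar_le : f xstar <= l := ltW (lt_le_trans fstar_lt fxt_le).
have pyth : bregman Phi gPhi xstar xt + bregman Phi gPhi xt xprev
            <= bregman Phi gPhi xstar xprev.
  apply: (bregman_proj_pythagoras gradPhi proj) => s /andP[s_gt0 s_lt1].
  by apply: level_set_segment; rewrite // !ltW.
apply: balanced_descent_arith; rewrite ?is_norm_ge0 //.
- have := D_lb xstar xt; have := D_lb xt xprev; have := D_ub xstar xprev.
  rewrite (is_norm_distC normN xstar); nra.
- have le_alpha_dist : alpha * N (xt - xstar) <= 2 * l.
    have := is_norm_dist_le normN xt xstar v; rewrite -(ler_pM2l alpha_gt0).
    have := growth xt; have := growth xstar; lra.
  by rewrite dist_l -mulrA mulrCA [2 * _]mulrCA ler_pM2l.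
Qed.
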